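(* Let $X$ be a separable infinite-dimensional Banach space and $T_1,\dots,T_N\in B(X)$ with $N\ge2$. Suppose there exist an increasing sequence $(n_k)$ of positive integers, a dense set $X_0\subset X$ and maps $S_k:X_0\to X$ such that (i) $T_i^{n_k}x\to0$ as $k\to\infty$ for every $x\in X_0$ and $1\le i\le N$; and (ii) for each $\epsilon>0$, $K\in\mathbb{N}$ and $x_0\in X_0$ there exists $k\ge K$ with $\|S_k(x_0)\|<\epsilon$ and $\|T_i^{n_k}S_k(x_0)-x_0\|<\epsilon$ for all $1\le i\le N$. Then $T_1,\dots,T_N$ satisfy the Simultaneous Blow-up/Collapse Property, and hence are densely s-hypercyclic.
   Context: $T_1,\dots,T_N$ satisfy the Simultaneous Blow-up/Collapse Property if for all non-empty open $W,U,V\subset X$ with $0\in W$ there is $n\in\mathbb{N}$ with $W\cap T_1^{-n}(U)\cap\cdots\cap T_N^{-n}(U)\ne\emptyset$ and $V\cap T_1^{-n}(W)\cap\cdots\cap T_N^{-n}(W)\ne\emptyset$. A vector $x$ is s-hypercyclic for $T_1,\dots,T_N$ if the closure of $\{(T_1^nx,\dots,T_N^nx):n\in\mathbb{N}\}$ in $\oplus_{i=1}^NX$ contains the diagonal $\{(y,\dots,y):y\in X\}$; the operators are densely s-hypercyclic if the set of s-hypercyclic vectors is dense in $X$. *)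

From HB Require Import structures.
From mathcomp Require Import all_boot all_order all_algebra.
From mathcomp Require Import all_classical all_reals all_analysis.
Set Implicit Arguments. Unset Strict Implicit. Unset Printing Implicit Defensive.
Import Order.TTheory GRing.Theory Num.Theory.
Import numFieldNormedType.Exports.
Local Open Scope classical_set_scope.
Local Open Scope ring_scope.

Definition separable_space (T : topologicalType) : Prop :=
  exists D : set T, countable D /\ dense D.

Definition infinite_dimensional (R : numDomainType) (X : lmodType R) : Prop :=
  forall s : seq X, exists x : X,
    forall c : 'I_(size s) -> R, x != \sum_(i < size s) c i *: s`_i.

Definition SBCP (R : realType) (X : normedModType R) (N : nat)
    (T : 'I_N -> X -> X) : Prop :=
  forall W U V : set X,
    open W -> open U -> open V -> W 0 -> U !=set0 -> V !=set0 ->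
    exists n : nat, (0 < n)%N /\
      (W `&` [set x | forall i, U (iter n (T i) x)]) !=set0 /\
      (V `&` [set x | forall i, W (iter n (T i) x)]) !=set0.

Definition s_hypercyclic (R : realType) (X : normedModType R) (N : nat)
    (T : 'I_N -> X -> X) (x : X) : Prop :=
  [set ((fun _ : 'I_N => y) : {ptws 'I_N -> X}) | y in [set: X]] `<=`
  closure [set ((fun i : 'I_N => iter n (T i) x) : {ptws 'I_N -> X})
          | n in [set n : nat | (0 < n)%N]].

Definition densely_s_hypercyclic (R : realType) (X : normedModType R) (N : nat)
    (T : 'I_N -> X -> X) : Prop :=
  dense [set x : X | s_hypercyclic T x].

From HB Require Import structures.
From mathcomp Require Import all_boot all_order all_algebra.
From mathcomp Require Import all_classical all_reals all_analysis.
From mathcomp Require Import lra.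
Import Order.TTheory GRing.Theory Num.Theory.
Import numFieldNormedType.Exports.
Local Open Scope classical_set_scope.
Local Open Scope ring_scope.

(* Conditions (i) and (ii) give the blow-up/collapse property directly: a point
   of X0 in V collapses into W, and S_k u is a small vector whose iterates all
   land near a point u of X0 in U.  For continuous linear T_i the property in
   turn makes each set [diag_approx T y e] of vectors x having some common iterate
   (T_1^p x, ..., T_N^p x) within e of (y, ..., y) open and dense: add a point
   blown up near y to a point collapsing to 0.  Taking y in a countable dense
   set and e = 1/(m+1), Baire's theorem makes the intersection of these sets
   dense, and every vector in it is s-hypercyclic. *)

Lemma ptws_cvg_coord {I S : Type} {T : topologicalType} (F : set_system S)
    {FF : Filter F} (u : S -> I -> T) (f : I -> T) :
  (forall i, (fun s => u s i) @ F --> f i) -> u @ F --> (f : {ptws I -> T}).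
Proof.
move=> uf; apply/cvg_sup => i.
rewrite cvg_image; last by rewrite eqEsubset; split=> v // _; exists (cst v).
apply: cvg_trans (uf i) => W /=; rewrite nbhs_simpl.
exists (@^~ i @^-1` W) => //.
by rewrite image_preimage // eqEsubset; split=> // t _; exists (fun _ => t).
Qed.

Lemma iter_raddfD (V : zmodType) (f : {additive V -> V}) n :
  {morph iter n f : a b / a + b}.
Proof. by elim: n => [|n IH] a b //=; rewrite IH raddfD. Qed.

Section normed.
Context {R : realType} {X : normedModType R}.

Lemma iter_continuous {f : X -> X} n : continuous f -> continuous (iter n f).
Proof.
move=> cf; elim: n => [|n IH] x /=; first exact: cvg_id.
exact: continuous_comp (IH x) (cf _).
Qed.

Lemma open_norm_ball {O : set X} {x : X} : open O -> O x ->
  exists2 e : R, 0 < e & forall y, `|x - y| < e -> O y.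
Proof.
move=> oO Ox; have /nbhs_normP[e e0 xeO] : nbhs x O by exact: open_nbhs_nbhs.
by exists e => // y; apply: xeO.
Qed.

End normed.

Section blowup_collapse.
Context {R : realType} {X : normedModType R} {N : nat} {T : 'I_N -> X -> X}.
Context {n : nat -> nat} {X0 : set X} {S : nat -> X -> X}.
Hypothesis n_gt0 : forall k, (0 < n k)%N.
Hypothesis X0_dense : dense X0.
Hypothesis iter_collapse : forall {x}, X0 x -> forall i,
  (fun k => iter (n k) (T i) x) @ \oo --> (0 : X).
Hypothesis iter_blowup : forall (eps : R) (K : nat) (x0 : X),
  0 < eps -> X0 x0 ->
  exists k : nat, (K <= k)%N /\ `|S k x0| < eps /\
    (forall i, `|iter (n k) (T i) (S k x0) - x0| < eps).

Lemma iter_collapse_near {x : X} {e : R} : X0 x -> 0 < e ->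
  \forall k \near \oo, forall i, `|iter (n k) (T i) x| < e.
Proof.
move=> X0x e0; apply: filter_forall => i.
exact: cvgr0_norm_lt _ (iter_collapse X0x i) _ e0.
Qed.

Lemma SBCP_of_blowup_collapse : SBCP T.
Proof.
move=> W U V oW oU oV W0 nU nV.
have [dw dw0 W_ball] := open_norm_ball oW W0.
have [u [Uu X0u]] := X0_dense _ nU oU.
have [du du0 U_ball] := open_norm_ball oU Uu.
have [v [Vv X0v]] := X0_dense _ nV oV.
have [K _ vK] := iter_collapse_near X0v dw0.
have [|k [Kk [Sku TSku]]] := iter_blowup (Num.min dw du) K u _ X0u.
  by rewrite lt_min dw0 du0.
move: Sku; rewrite lt_min => /andP[Sku_dw _].
exists (n k); split; first exact: n_gt0.
split; last first.
  by exists v; split=> // i; apply: W_ball; rewrite sub0r normrN; exact: vK Kk i.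
exists (S k u); split; first by apply: W_ball; rewrite sub0r normrN.
move=> i; apply: U_ball; rewrite distrC.
by have := TSku i; rewrite lt_min => /andP[].
Qed.

End blowup_collapse.

Section diag_approx.
Context {R : realType} {X : normedModType R} {N : nat}.

Definition diag_approx (T : 'I_N -> X -> X) (y : X) (e : R) : set X :=
  [set x | exists2 p, (0 < p)%N & forall i, `|iter p (T i) x - y| < e].

Lemma open_diag_approx (T : 'I_N -> X -> X) y e :
  (forall i, continuous (T i)) -> open (diag_approx T y e).
Proof.
move=> Tc; rewrite openE => x [p p_gt0 Tpx].
have : \forall z \near x, forall i, ball y e (iter p (T i) z).
  apply: filter_forall => i; apply: (iter_continuous p (Tc i) x).
  apply: open_nbhs_nbhs; split; first exact: ball_open.
  by rewrite -ball_normE /= distrC.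
apply: filterS => z Tpz; exists p => // i.
by have := Tpz i; rewrite -ball_normE /= distrC.
Qed.

Lemma dense_diag_approx (T : 'I_N -> {linear X -> X}) y e :
  SBCP (fun i => T i : X -> X) -> 0 < e ->
  dense (diag_approx (fun i => T i) y e).
Proof.
move=> sbcp e_gt0 O [v0 Ov0] oO.
have [d d_gt0 O_ball] := open_norm_ball oO Ov0.
pose r := Num.min (d / 2) (e / 4).
have r_gt0 : 0 < r by rewrite lt_min !divr_gt0.
have r_le_d : r <= d / 2 by rewrite ge_min lexx.
have r_le_e : r <= e / 4 by rewrite ge_min lexx orbT.
have e2_gt0 : 0 < e / 2 by rewrite divr_gt0.
have d2_gt0 : 0 < d / 2 by rewrite divr_gt0.
have [p [p_gt0 [[w [w_small Tw_near_y]] [v [v_near_v0 Tv_small]]]]] :=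
  sbcp (ball 0 r) (ball y (e / 2)) (ball v0 (d / 2)) (ball_open _ _)
    (ball_open _ _) (ball_open _ _) (ballxx _ r_gt0)
    (ex_intro _ y (ballxx _ e2_gt0)) (ex_intro _ v0 (ballxx _ d2_gt0)).
rewrite -!ball_normE /= sub0r normrN in w_small Tv_small v_near_v0 Tw_near_y.
exists (v + w); split.
  apply: O_ball; rewrite opprD addrA.
  have := ler_normD (v0 - v) (- w); rewrite normrN; lra.
exists p => // i; rewrite iter_raddfD -addrA.
have := Tv_small i; have := Tw_near_y i; rewrite sub0r normrN distrC.
have := ler_normD (iter p (T i) v) (iter p (T i) w - y); lra.
Qed.

Lemma diag_approx_dense_centers {T : 'I_N -> X -> X} {D : set X} {x : X} :
  dense D -> (forall d m, D d -> diag_approx T d m.+1%:R^-1 x) ->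
  forall y e, 0 < e -> diag_approx T y e x.
Proof.
move=> D_dense x_approx y e e_gt0.
have e2_gt0 : 0 < e / 2 by rewrite divr_gt0.
have [m _ m_small] := near_infty_natSinv_lt (PosNum e2_gt0).
have [d [d_near_y Dd]] :=
  D_dense (ball y (e / 2)) (ex_intro _ y (ballxx y e2_gt0)) (ball_open y _).
have [p p_gt0 Tpx] := x_approx d m Dd.
exists p => // i; rewrite -ball_normE /= distrC in d_near_y.
have := lt_trans (Tpx i) (m_small m (leqnn m)); rewrite /=.
have -> : iter p (T i) x - y = (iter p (T i) x - d) + (d - y).
  by rewrite addrA subrK.
by have := ler_normD (iter p (T i) x - d) (d - y); lra.
Qed.

Lemma s_hypercyclic_of_diag_approx (T : 'I_N -> X -> X) x :
  (forall y e, 0 < e -> diag_approx T y e x) -> s_hypercyclic T x.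
Proof.
move=> x_approx _ [y _ <-].
have : forall j, exists q, (0 < q)%N /\
    forall i, `|iter q (T i) x - y| < (j.+1%:R : R)^-1.
  move=> j; have [|q q_gt0 Tqx] := x_approx y (j.+1%:R^-1) _.
    by rewrite invr_gt0.
  by exists q.
case/choice => s s_approx.
apply: (@closed_cvg _ _ \oo _
  (fun j => (fun i => iter (s j) (T i) x) : {ptws 'I_N -> X})).
- exact: closed_closure.
- apply: nearW => j; apply: subset_closure.
  by exists (s j) => //; exact: (s_approx j).1.
- apply: ptws_cvg_coord => i; apply/cvgrPdist_lt => e e_gt0.
  apply: filterS (near_infty_natSinv_lt (PosNum e_gt0)) => j /= j_small.
  by rewrite distrC; apply: lt_trans ((s_approx j).2 i) j_small.
Qed.

End diag_approx.

Lemma dense_s_hypercyclic_of_SBCP {R : realType} {X : completeNormedModType R}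
    {N : nat} (T : 'I_N -> {linear X -> X}) :
  separable_space X -> (forall i, continuous (T i)) ->
  SBCP (fun i => T i : X -> X) -> densely_s_hypercyclic (fun i => T i : X -> X).
Proof.
move=> [D [D_countable D_dense]] Tc sbcp.
have /pcard_surjP[g g_onto] := D_countable.
pose F k := if @unpickle (nat * nat)%type k is Some (j, m)
  then diag_approx (fun i => T i) (g j) m.+1%:R^-1 else setT.
have F_open_dense k : open (F k) /\ dense (F k).
  rewrite /F; case: unpickle => [[j m]|].
    by split; [exact: open_diag_approx | exact: dense_diag_approx].
  by split=> [|O [x Ox] _]; [exact: openT | exists x].
move=> O nO oO; have [x [Ox Fx]] := Baire F_open_dense nO oO.
exists x; split => //; apply: s_hypercyclic_of_diag_approx.
apply: (diag_approx_dense_centers D_dense) => d m Dd.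
have [j _ gj] := g_onto d Dd.
by have := Fx (pickle (j, m)) I; rewrite /F pickleK gj.
Qed.

Theorem theorem3p1 (R : realType) (X : completeNormedModType R)
  (N : nat) (T : 'I_N -> {linear X -> X})
  (n : nat -> nat) (X0 : set X) (S : nat -> X -> X) :
  separable_space X ->
  infinite_dimensional X ->
  (2 <= N)%N ->
  (forall i, continuous (T i)) ->
  (forall k, (0 < n k)%N) ->
  (forall k, (n k < n k.+1)%N) ->
  dense X0 ->
  (forall x, X0 x -> forall i,
      (fun k => iter (n k) (T i) x) @ \oo --> (0 : X)) ->
  (forall (eps : R) (K : nat) (x0 : X), 0 < eps -> X0 x0 ->
      exists k : nat, (K <= k)%N /\ `|S k x0| < eps /\
        (forall i, `|iter (n k) (T i) (S k x0) - x0| < eps)) ->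
  SBCP (fun i => (T i : X -> X)) /\ densely_s_hypercyclic (fun i => (T i : X -> X)).
Proof.
move=> X_separable _ _ Tc n_gt0 _ X0_dense collapse blowup.
have sbcp := SBCP_of_blowup_collapse n_gt0 X0_dense collapse blowup.
by split; last exact: dense_s_hypercyclic_of_SBCP.
Qed.
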